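(* Let $n,m,v\ge1$ and let $S(n,m,v)$ be a memory system satisfying Processor Symmetry and Location Symmetry. Let $\Omega$ be a simple witness for $S(n,m,v)$ and let $\tau$ be an unambiguous trace of $S(n,m,v)$. If the graph $G(\Omega)(\tau)$ has a $k$-nice cycle, then there is an unambiguous trace $\tau''$ of $S(n,m,v)$ such that $G(\Omega)(\tau'')$ has a canonical $k$-nice cycle.
   Context: $\mathbb{N}_n=\{1,\dots,n\}$, $\mathbb{W}_v=\{0,\dots,v\}$. Memory events $E(n,m,v)=\{R,W\}\times\mathbb{N}_n\times\mathbb{N}_m\times\mathbb{W}_v$; for $e=\langle a,b,c,d\rangle$, $op(e)=a$, $proc(e)=b$, $loc(e)=c$, $data(e)=d$; $0$ models the initial value of every location. A memory system $S(n,m,v)$ is a regular set of finite runs over an alphabet containing $E(n,m,v)$ (other letters being internal events); a trace is the subsequence of memory events of a run. For a sequence $\tau$ of memory events with positions $1,\dots,|\tau|$: $P(\tau,i)=\{k: proc(\tau(k))=i\}$, $L(\tau,j)=\{k: loc(\tau(k))=j\}$, $L^w(\tau,j)=\{k\in L(\tau,j): op(\tau(k))=W\}$, $M(\tau,i)=\{\langle u,v\rangle: u,v\in P(\tau,i), u<v\}$. A trace $\tau$ is unambiguous if for every location $j$ and $x\in L^w(\tau,j)$, $data(\tau(x))\ne0$ and $data(\tau(x))\ne data(\tau(y))$ for all $y\in L^w(\tau,j)\setminus\{x\}$. Symmetry: for a permutation $\lambda$ of $\mathbb{N}_n$, $\lambda^p(\langle a,b,c,d\rangle)=\langle a,\lambda(b),c,d\rangle$;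 for a permutation $\lambda$ of $\mathbb{N}_m$, $\lambda^l(\langle a,b,c,d\rangle)=\langle a,b,\lambda(c),d\rangle$; both extended letterwise to sequences. Processor Symmetry: for every permutation $\lambda$ of $\mathbb{N}_n$ and every trace $\tau$ of $S(n,m,v)$, $\lambda^p(\tau)$ is a trace of $S(n,m,v)$. Location Symmetry: for every permutation $\lambda$ of $\mathbb{N}_m$ and every trace $\tau$ of $S(n,m,v)$, $\lambda^l(\tau)$ is a trace of $S(n,m,v)$. A witness $\Omega$ assigns to each trace $\tau$ and location $j$ a strict total order $\Omega(\tau,j)$ on $L^w(\tau,j)$; it is simple if $\langle x,y\rangle\in\Omega(\tau,j)$ iff $x<y$. For unambiguous $\tau$, $\Omega^e(\tau,j)\subseteq L(\tau,j)^2$: $\langle x,y\rangle\in\Omega^e(\tau,j)$ iff (1) $data(\tau(x))=data(\tau(y))$, $op(\tau(x))=W$, $op(\tau(y))=R$; or (2) $data(\tau(x))=0$ and $data(\tau(y))\ne0$; or (3) there are $a,b\in L^w(\tau,j)$ with $\langle a,b\rangle\in\Omega(\tau,j)$, $data(\tau(a))=data(\tau(x))$, $data(\tau(b))=data(\tau(y))$. $G(\Omega)(\tau)$ is the directed graph on $\{1,\dots,|\tau|\}$ with edge set $\bigcup_{i}M(\tau,i)\cup\bigcup_{j}\Omega^e(\tau,j)$. For $k\ge1$, $\oplus$ is addition in the cyclic group on $\mathbb{N}_k$ with identity $k$ ($x\oplus1=x+1$ for $x<k$, $k\oplus1=1$). A $k$-nice cycle in $G(\Omega)(\tau)$ is a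 sequence $u_1,v_1,\dots,u_k,v_k$ of pairwise distinct vertices such that: (i) for every $x$, $\langle u_x,v_x\rangle\in M(\tau,i)$ for some processor $i$ and $\langle v_x,u_{x\oplus1}\rangle\in\Omega^e(\tau,j)$ for some location $j$; (ii) the processors $i$ for distinct $x$ are distinct; (iii) the locations $j$ for distinct $x$ are distinct. A $k$-nice cycle is canonical if $\langle u_x,v_x\rangle\in M(\tau,x)$ and $\langle v_x,u_{x\oplus1}\rangle\in\Omega^e(\tau,x\oplus1)$ for all $1\le x\le k$. *)

From mathcomp Require Import all_boot fingroup perm.

Set Implicit Arguments.
Unset Strict Implicit.
Unset Printing Implicit Defensive.

Inductive opkind := Rd | Wr.

(* An event <a,b,c,d> with a in {R,W}, b in N_n, c in N_m, d in W_v.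
   Processor b = 1 + eproc, location c = 1 + eloc, data d = edata. *)
Record mev (n m v : nat) := MEv {
  eop : opkind; eproc : 'I_n; eloc : 'I_m; edata : 'I_v.+1 }.

Section Events.
Variables n m v : nat.
Definition op (e : mev n m v) : opkind := eop e.
Definition proc (e : mev n m v) : nat := (nat_of_ord (eproc e)).+1.
Definition loc (e : mev n m v) : nat := (nat_of_ord (eloc e)).+1.
Definition data (e : mev n m v) : nat := nat_of_ord (edata e).

Definition perm_p (lam : {perm 'I_n}) (e : mev n m v) : mev n m v :=
  MEv (eop e) (lam (eproc e)) (eloc e) (edata e).
Definition perm_l (lam : {perm 'I_m}) (e : mev n m v) : mev n m v :=
  MEv (eop e) (eproc e) (lam (eloc e)) (edata e).
End Events.

Definition regular (A : Type) (L : seq A -> Prop) : Prop :=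
  exists (Q : finType) (q0 : Q) (d : Q -> A -> Q) (F : pred Q),
    forall s, L s <-> F (foldl d q0 s).

(* Runs are over the alphabet E(n,m,v) + I (I = internal events). *)
Definition trace_of (n m v : nat) (I : Type) (r : seq (mev n m v + I))
  : seq (mev n m v) :=
  pmap (fun a => match a with inl e => Some e | inr _ => None end) r.

Definition is_trace (n m v : nat) (I : Type) (S : seq (mev n m v + I) -> Prop)
  (tau : seq (mev n m v)) : Prop :=
  exists r, S r /\ trace_of r = tau.

Definition processor_symmetry (n m v : nat) (I : Type)
  (S : seq (mev n m v + I) -> Prop) : Prop :=
  forall (lam : {perm 'I_n}) tau, is_trace S tau -> is_trace S (map (perm_p lam) tau).

Definition location_symmetry (n m v : nat) (I : Type)
  (S : seq (mev n m v + I) -> Prop) : Prop :=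
  forall (lam : {perm 'I_m}) tau, is_trace S tau -> is_trace S (map (perm_l lam) tau).

(* Positions are represented 0-based as 'I_(size tau) (position k+1 of the paper). *)
Definition pos (T : Type) (tau : seq T) := 'I_(size tau).
Definition at_ (T : Type) (tau : seq T) (k : pos tau) : T := tnth (in_tuple tau) k.
Arguments at_ {T tau} k.

Section Trace.
Variables n m v : nat.
Variable tau : seq (mev n m v).

Definition Pset (i : nat) (k : pos tau) : Prop := proc (at_ k) = i.
Definition Lset (j : nat) (k : pos tau) : Prop := loc (at_ k) = j.
Definition Lwset (j : nat) (k : pos tau) : Prop := Lset j k /\ op (at_ k) = Wr.
Definition Mrel (i : nat) (u w : pos tau) : Prop := Pset i u /\ Pset i w /\ u < w.

Definition unambiguous : Prop :=
  forall j (x : pos tau), Lwset j x ->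
    data (at_ x) <> 0 /\
    forall y : pos tau, Lwset j y -> y <> x -> data (at_ x) <> data (at_ y).
End Trace.
Arguments Pset {n m v} tau i k.
Arguments Lset {n m v} tau j k.
Arguments Lwset {n m v} tau j k.
Arguments Mrel {n m v} tau i u w.
Arguments unambiguous {n m v} tau.

Definition witness_fun (n m v : nat) :=
  forall tau : seq (mev n m v), nat -> pos tau -> pos tau -> Prop.

Definition is_witness (n m v : nat) (I : Type) (S : seq (mev n m v + I) -> Prop)
  (Om : witness_fun n m v) : Prop :=
  forall tau, is_trace S tau -> forall j : nat,
    (forall x y, Om tau j x y -> Lwset tau j x /\ Lwset tau j y) /\
    (forall x, ~ Om tau j x x) /\
    (forall x y z, Om tau j x y -> Om tau j y z -> Om tau j x z) /\
    (forall x y, Lwset tau j x -> Lwset tau j y -> x <> y ->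
        Om tau j x y \/ Om tau j y x).

Definition simple_witness (n m v : nat) (I : Type) (S : seq (mev n m v + I) -> Prop)
  (Om : witness_fun n m v) : Prop :=
  forall tau, is_trace S tau -> forall (j : nat) (x y : pos tau),
    Om tau j x y <-> (Lwset tau j x /\ Lwset tau j y /\ x < y).

Definition Omega_e (n m v : nat) (Om : witness_fun n m v) (tau : seq (mev n m v))
  (j : nat) (x y : pos tau) : Prop :=
  Lset tau j x /\ Lset tau j y /\
  [\/ data (at_ x) = data (at_ y) /\ op (at_ x) = Wr /\ op (at_ y) = Rd,
      data (at_ x) = 0 /\ data (at_ y) <> 0
    | exists a b : pos tau, [/\ Lwset tau j a, Lwset tau j b, Om tau j a b,
                               data (at_ a) = data (at_ x) & data (at_ b) = data (at_ y)]].

Arguments Omega_e {n m v} Om tau j x y.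

Definition Gedge (n m v : nat) (Om : witness_fun n m v) (tau : seq (mev n m v))
  (x y : pos tau) : Prop :=
  (exists i, Mrel tau i x y) \/ (exists j, Omega_e Om tau j x y).

Arguments Gedge {n m v} Om tau x y.

Definition oplus1 (k x : nat) : nat := if x < k then x.+1 else 1.

Definition cyc_distinct (T : Type) (k : nat) (u w : nat -> T) : Prop :=
  (forall x y, 1 <= x <= k -> 1 <= y <= k -> x <> y -> u x <> u y /\ w x <> w y) /\
  (forall x y, 1 <= x <= k -> 1 <= y <= k -> u x <> w y).

Definition nice_cycle (n m v : nat) (Om : witness_fun n m v) (tau : seq (mev n m v))
  (k : nat) : Prop :=
  exists (u w : nat -> pos tau) (p l : nat -> nat),
    [/\ cyc_distinct k u w,
        (forall x, 1 <= x <= k ->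
           Mrel tau (p x) (u x) (w x) /\ Omega_e Om tau (l x) (w x) (u (oplus1 k x))),
        (forall x y, 1 <= x <= k -> 1 <= y <= k -> x <> y -> p x <> p y)
      & (forall x y, 1 <= x <= k -> 1 <= y <= k -> x <> y -> l x <> l y)].

Definition canonical_nice_cycle (n m v : nat) (Om : witness_fun n m v)
  (tau : seq (mev n m v)) (k : nat) : Prop :=
  exists (u w : nat -> pos tau),
    cyc_distinct k u w /\
    (forall x, 1 <= x <= k ->
       Mrel tau x (u x) (w x) /\ Omega_e Om tau (oplus1 k x) (w x) (u (oplus1 k x))).
Arguments nice_cycle {n m v} Om tau k.
Arguments canonical_nice_cycle {n m v} Om tau k.

(* The processors of a nice cycle are pairwise distinct, and so are its
   locations; hence some permutation of processors sends the processor of the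
   x-th program-order edge to x, and some permutation of locations sends the
   location of the x-th Omega^e edge to x (+) 1.  Relabelling the trace by both
   permutations yields a trace (by the two symmetries) with the same positions,
   operations and data: it stays unambiguous, the simple witness still orders
   writes by position, and the nice cycle becomes canonical. *)

From mathcomp Require Import all_boot fingroup perm.
From mathcomp Require Import zify.

Set Implicit Arguments.
Unset Strict Implicit.
Unset Printing Implicit Defensive.

Lemma perm_extend (T : finType) (X : eqType) (s : seq X) (g h : X -> T) :
  {in s &, injective g} -> {in s &, injective h} ->
  exists p : {perm T}, {in s, forall x, p (g x) = h x}.
Proof.
elim: s => [|x0 s IHs] ginj hinj; first by exists 1%g.
have sub_s := @mem_behead _ (x0 :: s).
have [p Hp] := IHs (sub_in2 sub_s ginj) (sub_in2 sub_s hinj).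
have [x0s | x0Ns] := boolP (x0 \in s).
  by exists p => x; rewrite inE => /predU1P[->|]; apply: Hp.
exists (p * tperm (p (g x0)) (h x0))%g => x; rewrite inE => /predU1P[-> | xs].
  by rewrite permM tpermL.
have x0x : x0 != x by apply: contraNneq x0Ns => ->.
rewrite permM (Hp x) // tpermD //.
  by rewrite -Hp // (inj_eq perm_inj) (inj_in_eq ginj) ?mem_head ?sub_s.
by rewrite (inj_in_eq hinj) ?mem_head ?sub_s.
Qed.

Lemma perm_to_labels (N : nat) (X : eqType) (s : seq X) (g : X -> 'I_N) (h : X -> nat) :
  uniq s -> {in s &, injective g} -> {in s &, injective h} ->
  {in s, forall x, h x < size s} ->
  exists p : {perm 'I_N}, {in s, forall x, val (p (g x)) = h x}.
Proof.
move=> s_uniq ginj hinj h_lt.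
have size_s : size s <= N.
  rewrite -(size_map g) -(card_uniqP _) ?map_inj_in_uniq //.
  by apply: leq_trans (max_card _) _; rewrite card_ord.
pose h' x : 'I_N := insubd (g x) (h x).
have h'E x : x \in s -> val (h' x) = h x.
  by move=> xs; rewrite val_insubd (leq_trans (h_lt x xs) size_s).
have [|p Hp] := @perm_extend _ _ s g h' ginj.
  by move=> x y xs ys /(congr1 val); rewrite !h'E //; apply: hinj.
by exists p => x xs; rewrite Hp ?h'E.
Qed.

Lemma cyc_distinct_inj (T U : Type) (f : T -> U) (k : nat) (u w : nat -> T) :
  injective f -> cyc_distinct k u w -> cyc_distinct k (f \o u) (f \o w).
Proof.
move=> finj [uw_inj uw_disj]; split=> x y xk yk; last by move/finj; apply: uw_disj.
by move=> /(uw_inj x y xk yk) [ux_uy wx_wy]; split=> /finj.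
Qed.

Lemma at_map (T U : Type) (f : T -> U) (s : seq T) (i : pos s) :
  @at_ U (map f s) (cast_ord (esym (size_map f s)) i) = f (at_ i).
Proof.
rewrite /at_ (tnth_nth (f (tnth (in_tuple s) i))) /= (nth_map (tnth (in_tuple s) i)) //.
by congr f; rewrite [RHS](tnth_nth (tnth (in_tuple s) i)).
Qed.

Section Relabel.

Variables (n m v : nat) (lam : {perm 'I_n}) (mu : {perm 'I_m}).

Definition relabel (e : mev n m v) : mev n m v :=
  MEv (eop e) (lam (eproc e)) (mu (eloc e)) (edata e).

Lemma proc_relabel_eq (e e' : mev n m v) :
  (proc (relabel e) == proc (relabel e')) = (proc e == proc e').
Proof. by rewrite /proc /= !eqSS (inj_eq val_inj) (inj_eq perm_inj) -(inj_eq val_inj). Qed.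

Lemma loc_relabel_eq (e e' : mev n m v) :
  (loc (relabel e) == loc (relabel e')) = (loc e == loc e').
Proof. by rewrite /loc /= !eqSS (inj_eq val_inj) (inj_eq perm_inj) -(inj_eq val_inj). Qed.

Lemma is_trace_relabel (I : Type) (S : seq (mev n m v + I) -> Prop) tau :
  processor_symmetry S -> location_symmetry S ->
  is_trace S tau -> is_trace S (map relabel tau).
Proof.
move=> Sp Sl tauS; have -> : map relabel tau = map (perm_l mu) (map (perm_p lam) tau).
  by rewrite -map_comp.
by apply/Sl/Sp.
Qed.

Variable tau : seq (mev n m v).

Definition relabel_pos (i : pos tau) : pos (map relabel tau) :=
  cast_ord (esym (size_map relabel tau)) i.

Lemma at_relabel_pos i : at_ (relabel_pos i) = relabel (at_ i).
Proof. exact: at_map. Qed.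

Lemma relabel_pos_inj : injective relabel_pos.
Proof. exact: cast_ord_inj. Qed.

Lemma relabel_posP (i' : pos (map relabel tau)) : exists i, i' = relabel_pos i.
Proof. by exists (cast_ord (size_map relabel tau) i'); rewrite /relabel_pos cast_ordK. Qed.

Lemma unambiguous_relabel : unambiguous tau -> unambiguous (map relabel tau).
Proof.
move=> tau_un j x'; have [x ->] := relabel_posP x'.
rewrite /Lwset /Lset /op at_relabel_pos => -[<- /= Wx].
have [nz data_uniq] := tau_un (loc (at_ x)) x (conj erefl Wx).
split=> // y' [Ly' Wy'] y'x; have [y yE] := relabel_posP y'; subst y'.
move: Ly' Wy'; rewrite /Lset /op !at_relabel_pos => /eqP Ly Wy.
apply: data_uniq; last by move=> yx; apply: y'x; rewrite yx.
by split=> //; apply/eqP; rewrite /Lset -loc_relabel_eq.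
Qed.

Lemma Mrel_relabel i x y :
  Mrel tau i x y ->
  Mrel (map relabel tau) (proc (relabel (at_ x))) (relabel_pos x) (relabel_pos y).
Proof.
move=> [Px [Py xy]]; rewrite /Mrel /Pset !at_relabel_pos; split=> //; split=> //.
by apply/eqP; rewrite proc_relabel_eq Px Py.
Qed.

Lemma Omega_e_relabel (I : Type) (S : seq (mev n m v + I) -> Prop) Om j x y :
  simple_witness S Om -> is_trace S tau -> is_trace S (map relabel tau) ->
  Omega_e Om tau j x y ->
  Omega_e Om (map relabel tau) (loc (relabel (at_ x))) (relabel_pos x) (relabel_pos y).
Proof.
move=> Om_simple tauS tau'S [Lx [Ly edge]].
have Lset_relabel z : Lset tau j z ->
    Lset (map relabel tau) (loc (relabel (at_ x))) (relabel_pos z).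
  by move=> Lz; apply/eqP; rewrite /Lset at_relabel_pos loc_relabel_eq Lx Lz.
split; [exact: Lset_relabel | split; first exact: Lset_relabel].
case: edge => [[dxy [Wx Ry]] | [dx dy] | [a [b [[La Wa] [Lb Wb] ab da db]]]].
- by apply: Or31; rewrite !at_relabel_pos.
- by apply: Or32; rewrite !at_relabel_pos.
- apply: Or33; exists (relabel_pos a), (relabel_pos b).
  have [_ [_ a_lt_b]] := (Om_simple _ tauS _ _ _).1 ab.
  have Lwa : Lwset (map relabel tau) (loc (relabel (at_ x))) (relabel_pos a).
    by split; [exact: Lset_relabel | rewrite /op at_relabel_pos].
  have Lwb : Lwset (map relabel tau) (loc (relabel (at_ x))) (relabel_pos b).
    by split; [exact: Lset_relabel | rewrite /op at_relabel_pos].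
  by split; rewrite ?at_relabel_pos //; apply/(Om_simple _ tau'S).
Qed.

Lemma canonical_nice_cycle_relabel (I : Type) (S : seq (mev n m v + I) -> Prop) Om k
    (u w : nat -> pos tau) (p l : nat -> nat) :
  simple_witness S Om -> is_trace S tau -> is_trace S (map relabel tau) ->
  cyc_distinct k u w ->
  (forall x, 1 <= x <= k ->
     Mrel tau (p x) (u x) (w x) /\ Omega_e Om tau (l x) (w x) (u (oplus1 k x))) ->
  (forall x, 1 <= x <= k ->
     proc (relabel (at_ (u x))) = x /\ loc (relabel (at_ (w x))) = oplus1 k x) ->
  canonical_nice_cycle Om (map relabel tau) k.
Proof.
move=> Om_simple tauS tau'S uw_distinct cycle labels.
exists (relabel_pos \o u), (relabel_pos \o w).
split; first exact: cyc_distinct_inj relabel_pos_inj uw_distinct.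
move=> x xk; have [uw_M wu_E] := cycle x xk; have [Pu Lw] := labels x xk.
split; first by have := Mrel_relabel uw_M; rewrite Pu.
by have := Omega_e_relabel Om_simple tauS tau'S wu_E; rewrite Lw.
Qed.

End Relabel.

Section NiceCycleLabels.

Variables (n m v : nat) (Om : witness_fun n m v) (tau : seq (mev n m v)) (k : nat).
Variables (u w : nat -> pos tau) (p l : nat -> nat).
Hypothesis cycle : forall x, 1 <= x <= k ->
  Mrel tau (p x) (u x) (w x) /\ Omega_e Om tau (l x) (w x) (u (oplus1 k x)).

Lemma nice_cycle_proc_inj :
  (forall x y, 1 <= x <= k -> 1 <= y <= k -> x <> y -> p x <> p y) ->
  {in iota 1 k &, injective (fun x => eproc (at_ (u x)))}.
Proof.
move=> p_inj x y; rewrite !mem_iota add1n !ltnS => xk yk ux_uy.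
case: (eqVneq x y) => // /eqP xy; case: (p_inj x y xk yk xy).
have [[Pux _] _] := cycle xk; have [[Puy _] _] := cycle yk.
by rewrite -Pux -Puy /Pset /proc ux_uy.
Qed.

Lemma nice_cycle_loc_inj :
  (forall x y, 1 <= x <= k -> 1 <= y <= k -> x <> y -> l x <> l y) ->
  {in iota 1 k &, injective (fun x => eloc (at_ (w x)))}.
Proof.
move=> l_inj x y; rewrite !mem_iota add1n !ltnS => xk yk wx_wy.
case: (eqVneq x y) => // /eqP xy; case: (l_inj x y xk yk xy).
have [_ [Lwx _]] := cycle xk; have [_ [Lwy _]] := cycle yk.
by rewrite -Lwx -Lwy /Lset /loc wx_wy.
Qed.

End NiceCycleLabels.

Theorem theorem7p5 (n m v : nat) (I : finType) (S : seq (mev n m v + I) -> Prop)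
  (Om : witness_fun n m v) (tau : seq (mev n m v)) (k : nat) :
  1 <= n -> 1 <= m -> 1 <= v ->
  regular S ->
  processor_symmetry S -> location_symmetry S ->
  is_witness S Om -> simple_witness S Om ->
  is_trace S tau -> unambiguous tau ->
  1 <= k ->
  nice_cycle Om tau k ->
  exists tau'' : seq (mev n m v),
    [/\ is_trace S tau'', unambiguous tau'' & canonical_nice_cycle Om tau'' k].
Proof.
move=> _ _ _ _ Sp Sl _ Om_simple tauS tau_un _ [u [w [p [l [uw_distinct cycle p_inj l_inj]]]]].
(* [proc] and [loc] are 1-based, so the permuted indices are x.-1 and (x (+) 1).-1. *)
have [||lam lamE] := perm_to_labels (h := predn) (iota_uniq 1 k)
  (nice_cycle_proc_inj cycle p_inj).
- by move=> x y; rewrite !mem_iota; lia.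
- by move=> x; rewrite mem_iota size_iota; lia.
have [||mu muE] := perm_to_labels (h := fun x => (oplus1 k x).-1) (iota_uniq 1 k)
  (nice_cycle_loc_inj cycle l_inj).
- by move=> x y; rewrite !mem_iota /oplus1; case: ifP; case: ifP; lia.
- by move=> x; rewrite mem_iota size_iota /oplus1; case: ifP; lia.
have tau'S := is_trace_relabel lam mu Sp Sl tauS.
exists (map (relabel lam mu) tau); split=> //; first exact: unambiguous_relabel.
apply: canonical_nice_cycle_relabel Om_simple tauS tau'S uw_distinct cycle _ => x xk.
have xs : x \in iota 1 k by rewrite mem_iota; lia.
by rewrite /proc /loc /= lamE ?muE // /oplus1; case: ifP; lia.
Qed.
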